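(* Let $G$ be a finite simple undirected graph on $n\ge 3$ vertices, and let $\lambda_1(G)\ge \lambda_2(G)\ge\cdots\ge\lambda_n(G)$ be the eigenvalues of its adjacency matrix. Then \[ \lambda_3(G)\le \frac{n}{3}-1. \] *)

From HB Require Import structures.
From mathcomp Require Import all_boot all_order all_algebra.
From mathcomp Require Import reals.
Set Implicit Arguments. Unset Strict Implicit. Unset Printing Implicit Defensive.
Import Order.TTheory GRing.Theory Num.Theory.
Local Open Scope ring_scope.

Definition simple_graph (n : nat) (e : rel 'I_n) : Prop :=
  symmetric e /\ irreflexive e.

Definition adjmx (R : pzRingType) (n : nat) (e : rel 'I_n) : 'M[R]_n :=
  \matrix_(i, j) (e i j)%:R.

(* s is the list of eigenvalues of A, counted with (algebraic) multiplicity,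
   in non-increasing order: lambda_1 >= lambda_2 >= ... >= lambda_n. *)
Definition eigenvalues_desc (R : realDomainType) (n : nat) (A : 'M[R]_n)
    (s : seq R) : Prop :=
  sorted (>=%R) s /\ char_poly A = \prod_(x <- s) ('X - x%:P).

From HB Require Import structures.
From mathcomp Require Import all_boot all_order all_algebra.
From mathcomp Require Import reals.
From mathcomp Require Import perm.
From mathcomp.algebra_tactics Require Import ring lra.
Import Order.TTheory GRing.Theory Num.Theory.
Local Open Scope ring_scope.

Set Implicit Arguments.
Unset Strict Implicit.
Unset Printing Implicit Defensive.

(* Inside the span of eigenvectors for lambda_1, lambda_2, lambda_3 pick
   orthonormal x, y orthogonal to the all-ones vector. With v_i = (x_i, y_i) in
   the plane, the Rayleigh quotients give
     2 lambda_3 <= x^T A x + y^T A y = sum_{i,j} e_ij <v_i, v_j>.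
   Bounding each edge term by (|<v_i, v_j>| + <v_i, v_j>) / 2, and using
   sum_{i,j} <v_i, v_j> = 0 and sum_i |v_i|^2 = 2, reduces the claim to
   sum_{i,j} |<v_i, v_j>| <= 4n/3. For this write |cos t| below the trigonometric
   polynomial 2/3 + 7/18 cos 2t - 1/18 cos 4t and sum over pairs: the cos 4t part
   sums to a nonpositive contribution, and the other two are controlled by
   Bessel's inequality, since sum x_i^2 = sum y_i^2 and sum x_i y_i = 0 make the
   angle-doubled vectors orthogonal to the lengths |v_i|. *)

Section PlaneVectors.
Variable R : rcfType.
Implicit Types (c : R) (v w : R * R).

(* cheb2 (cos t) = cos (2 t) *)
Definition cheb2 c := 2 * c ^+ 2 - 1.

Lemma abs_le_cheb2_comb c : c ^+ 2 <= 1 ->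
  `|c| <= 2/3 + 7/18 * cheb2 c - 1/18 * cheb2 (cheb2 c).
Proof.
rewrite /cheb2 -[c ^+ 2]real_normK ?num_real //; set a := `|c|.
move=> a2_le1; have a_ge0 : 0 <= a := normr_ge0 c.
have a_le1 : a <= 1 by nra.
(* the gap is (2 a - 1)^2 (1 - a) (a + 2) / 9 *)
have : 0 <= (2 * a - 1) ^+ 2 * ((1 - a) * (a + 2)).
  by apply: mulr_ge0; [exact: sqr_ge0 | nra].
nra.
Qed.

Definition dot2 v w := v.1 * w.1 + v.2 * w.2.
Definition norm2 v := Num.sqrt (dot2 v v).

(* In polar coordinates, (r, t) |-> (r, 2 t); the origin is fixed since x / 0 = 0. *)
Definition double_angle v :=
  ((v.1 ^+ 2 - v.2 ^+ 2) / norm2 v, 2 * v.1 * v.2 / norm2 v).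

Lemma norm2_ge0 v : 0 <= norm2 v.
Proof. exact: sqrtr_ge0. Qed.

Lemma sqr_norm2 v : norm2 v ^+ 2 = dot2 v v.
Proof. by rewrite sqr_sqrtr // addr_ge0 // -expr2 sqr_ge0. Qed.

Lemma norm2_eq0 v : norm2 v = 0 -> v.1 = 0 /\ v.2 = 0.
Proof.
move=> v0; have /eqP := sqr_norm2 v; rewrite v0 expr0n /= eq_sym /dot2 -!expr2.
by rewrite paddr_eq0 ?sqr_ge0 // !sqrf_eq0 => /andP[/eqP-> /eqP->].
Qed.

Lemma abs_dot2_le_norm2 v w : `|dot2 v w| <= norm2 v * norm2 w.
Proof.
rewrite -ler_sqr ?nnegrE ?mulr_ge0 ?norm2_ge0 // real_normK ?num_real //.
rewrite exprMn !sqr_norm2 /dot2.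
have : 0 <= (v.1 * w.2 - v.2 * w.1) ^+ 2 := sqr_ge0 _.
nra.
Qed.

Lemma double_angle0 v : norm2 v = 0 -> double_angle v = (0, 0).
Proof. by move=> v0; rewrite /double_angle v0 invr0 !mulr0. Qed.

Lemma norm2_double_angle v : norm2 (double_angle v) = norm2 v.
Proof.
have [v0|v_neq0] := eqVneq (norm2 v) 0.
  by rewrite double_angle0 // v0 /norm2 /dot2 /= mulr0 addr0 sqrtr0.
rewrite -[RHS]ger0_norm ?norm2_ge0 // -sqrtr_sqr; congr Num.sqrt.
have sumsq : (v.1 ^+ 2 - v.2 ^+ 2) ^+ 2 + (2 * v.1 * v.2) ^+ 2 = (norm2 v ^+ 2) ^+ 2.
  by rewrite sqr_norm2 /dot2; ring.
by rewrite /dot2 /= -!expr2 !expr_div_n -mulrDl sumsq; field.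
Qed.

Lemma norm2_mul_double_angle v :
  norm2 v * (double_angle v).1 = v.1 ^+ 2 - v.2 ^+ 2 /\
  norm2 v * (double_angle v).2 = 2 * (v.1 * v.2).
Proof.
have [v0|v_neq0] := eqVneq (norm2 v) 0.
  by have [-> ->] := norm2_eq0 v0; rewrite v0 !mul0r expr0n subr0 mulr0.
by split; rewrite /= mulrC divfK // mulrA.
Qed.

Lemma dot2_double_angle v w :
  dot2 (double_angle v) (double_angle w) =
  norm2 v * norm2 w * cheb2 (dot2 v w / (norm2 v * norm2 w)).
Proof.
have [v0|v_neq0] := eqVneq (norm2 v) 0.
  by rewrite double_angle0 // v0 /dot2 /= !mul0r add0r.
have [w0|w_neq0] := eqVneq (norm2 w) 0.
  by rewrite (double_angle0 w0) w0 /dot2 /= !(mulr0, mul0r) addr0.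
have -> : dot2 (double_angle v) (double_angle w) =
    (2 * dot2 v w ^+ 2 - dot2 v v * dot2 w w) / (norm2 v * norm2 w).
  by rewrite /dot2 /=; field; apply/andP.
by rewrite -!sqr_norm2 /cheb2; field; apply/andP.
Qed.

Lemma abs_dot2_le_harmonics v w :
  `|dot2 v w| <= 2/3 * (norm2 v * norm2 w)
    + 7/18 * dot2 (double_angle v) (double_angle w)
    - 1/18 * dot2 (double_angle (double_angle v)) (double_angle (double_angle w)).
Proof.
rewrite (dot2_double_angle (double_angle v)) !norm2_double_angle dot2_double_angle.
set N := norm2 v * norm2 w; have N_ge0 : 0 <= N by rewrite mulr_ge0 ?norm2_ge0.
have dot_le := abs_dot2_le_norm2 v w; rewrite -/N in dot_le.
have [N0|N_neq0] := eqVneq N 0.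
  by rewrite N0 !(mulr0, mul0r, addr0, subr0) -N0.
set c := dot2 v w / N.
have -> : dot2 v w = N * c by rewrite mulrC divfK.
have -> : N * cheb2 c / N = cheb2 c by rewrite mulrC mulKf.
have -> : 2/3 * N + 7/18 * (N * cheb2 c) - 1/18 * (N * cheb2 (cheb2 c)) =
    N * (2/3 + 7/18 * cheb2 c - 1/18 * cheb2 (cheb2 c)) by ring.
rewrite normrM ger0_norm // ler_wpM2l //.
have c_le1 : `|c| <= 1.
  by rewrite normrM normfV (ger0_norm N_ge0) ler_pdivrMr ?lt_def ?N_neq0 // mul1r.
apply: abs_le_cheb2_comb; rewrite -real_normK ?num_real //.
by have := normr_ge0 c; nra.
Qed.

End PlaneVectors.

Section PlaneFrames.
Variables (R : rcfType) (n : nat).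
Implicit Types (f r a b : 'I_n -> R) (v : 'I_n -> R * R).

Lemma sum_mul_pairs f : \sum_i \sum_j f i * f j = (\sum_i f i) ^+ 2.
Proof. by rewrite expr2 mulr_suml; apply: eq_bigr => i _; rewrite mulr_sumr. Qed.

Lemma sum_dot2_pairs v :
  \sum_i \sum_j dot2 (v i) (v j) = (\sum_i (v i).1) ^+ 2 + (\sum_i (v i).2) ^+ 2.
Proof.
rewrite -!sum_mul_pairs -big_split /=.
by apply: eq_bigr => i _; rewrite -big_split.
Qed.

(* Bessel's inequality for the all-ones vector of C^n against the orthogonal
   pair r, a + i b of vectors of equal length. *)
Lemma bessel_ones r a b :
  (forall i, a i ^+ 2 + b i ^+ 2 = r i ^+ 2) ->
  \sum_i r i * a i = 0 -> \sum_i r i * b i = 0 -> 0 < \sum_i r i ^+ 2 ->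
  (\sum_i r i) ^+ 2 + (\sum_i a i) ^+ 2 + (\sum_i b i) ^+ 2 <= n%:R * \sum_i r i ^+ 2.
Proof.
move=> abr ra0 rb0 rho_gt0.
set S := \sum_i r i; set A := \sum_i a i; set B := \sum_i b i.
set rho := \sum_i r i ^+ 2 in rho_gt0 *.
have : 0 <= \sum_i ((rho - S * r i - (A * a i + B * b i)) ^+ 2 + (A * b i - B * a i) ^+ 2).
  by apply: sumr_ge0 => i _; rewrite addr_ge0 ?sqr_ge0.
have expand i : (rho - S * r i - (A * a i + B * b i)) ^+ 2 + (A * b i - B * a i) ^+ 2 =
    rho ^+ 2 + S ^+ 2 * r i ^+ 2 + (A ^+ 2 + B ^+ 2) * (a i ^+ 2 + b i ^+ 2)
    - 2 * rho * S * r i - 2 * rho * A * a i - 2 * rho * B * b i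
    + 2 * S * A * (r i * a i) + 2 * S * B * (r i * b i).
  by ring.
rewrite (eq_bigr _ (fun i _ => expand i)) !(big_split, sumrN) /= -!mulr_sumr.
rewrite (eq_bigr _ (fun i _ => abr i)) ra0 rb0 sumr_const card_ord -/S -/A -/B -/rho.
rewrite -mulr_natr; nra.
Qed.

Lemma sum_abs_dot2_le v :
  \sum_i (v i).1 ^+ 2 = 1 -> \sum_i (v i).2 ^+ 2 = 1 -> \sum_i (v i).1 * (v i).2 = 0 ->
  \sum_i \sum_j `|dot2 (v i) (v j)| <= 4/3 * n%:R.
Proof.
move=> x_unit y_unit xy0.
pose r i := norm2 (v i); pose d i := double_angle (v i); pose dd i := double_angle (d i).
have harmonics : \sum_i \sum_j `|dot2 (v i) (v j)| <=
    2/3 * (\sum_i r i) ^+ 2 + 7/18 * ((\sum_i (d i).1) ^+ 2 + (\sum_i (d i).2) ^+ 2)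
    - 1/18 * ((\sum_i (dd i).1) ^+ 2 + (\sum_i (dd i).2) ^+ 2).
  rewrite -sum_mul_pairs -!sum_dot2_pairs !mulr_sumr -big_split -sumrB /=.
  apply: ler_sum => i _; rewrite !mulr_sumr -big_split -sumrB /=.
  by apply: ler_sum => j _; apply: abs_dot2_le_harmonics.
have r_sqr i : r i ^+ 2 = (v i).1 ^+ 2 + (v i).2 ^+ 2 by rewrite sqr_norm2 /dot2 -!expr2.
have rho2 : \sum_i r i ^+ 2 = 2 by rewrite (eq_bigr _ (fun i _ => r_sqr i)) big_split /= x_unit y_unit.
have d_sqr i : (d i).1 ^+ 2 + (d i).2 ^+ 2 = r i ^+ 2.
  by rewrite /r -norm2_double_angle sqr_norm2 /dot2 -!expr2.
have rd1 : \sum_i r i * (d i).1 = 0.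
  under eq_bigr => i _ do rewrite (norm2_mul_double_angle (v i)).1.
  by rewrite sumrB x_unit y_unit subrr.
have rd2 : \sum_i r i * (d i).2 = 0.
  under eq_bigr => i _ do rewrite (norm2_mul_double_angle (v i)).2.
  by rewrite -mulr_sumr xy0 mulr0.
have := bessel_ones d_sqr rd1 rd2; rewrite rho2 => /(_ (ltr0Sn _ 1)).
have := sqr_ge0 (\sum_i (d i).1); have := sqr_ge0 (\sum_i (d i).2).
have := addr_ge0 (sqr_ge0 (\sum_i (dd i).1)) (sqr_ge0 (\sum_i (dd i).2)).
lra.
Qed.

Lemma adjacency_form_le (e : rel 'I_n) v : irreflexive e ->
  \sum_i (v i).1 ^+ 2 = 1 -> \sum_i (v i).2 ^+ 2 = 1 -> \sum_i (v i).1 * (v i).2 = 0 ->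
  \sum_i (v i).1 = 0 -> \sum_i (v i).2 = 0 ->
  \sum_i \sum_j (e i j)%:R * dot2 (v i) (v j) <= 2/3 * n%:R - 2.
Proof.
move=> e_irr x_unit y_unit xy0 x_sum0 y_sum0.
pose P i j := dot2 (v i) (v j).
have entry_le i j : (e i j)%:R * P i j <= (`|P i j| + P i j) / 2 - (i == j)%:R * P i j.
  have := ler_norm (P i j); have := ler_norm (- P i j); rewrite normrN.
  have [<-|_] := eqVneq i j; first by rewrite e_irr /=; lra.
  by case: (e i j) => /=; lra.
have diag i : \sum_j (i == j)%:R * P i j = P i i.
  rewrite (bigD1 i) //= eqxx mul1r big1 ?addr0 // => j /negPf.
  by rewrite eq_sym => ->; rewrite mul0r.
have sum_P : \sum_i \sum_j P i j = 0 by rewrite sum_dot2_pairs x_sum0 y_sum0 expr0n addr0.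
have trace_P : \sum_i P i i = 2.
  by rewrite big_split /= -!(eq_bigr _ (fun i _ => expr2 _)) x_unit y_unit.
apply: le_trans (ler_sum _ (fun i _ => ler_sum _ (fun j _ => entry_le i j))) _.
under eq_bigr => i _ do rewrite sumrB -mulr_suml big_split diag /=.
rewrite sumrB -mulr_suml big_split /= sum_P trace_P addr0.
have := sum_abs_dot2_le x_unit y_unit xy0; lra.
Qed.

End PlaneFrames.

Lemma prod_XsubC_dvd_exp (F : idomainType) (s t : seq F) : {subset s <= t} ->
  \prod_(x <- s) ('X - x%:P) %| (\prod_(x <- t) ('X - x%:P)) ^+ size s.
Proof.
elim: s => [|a s IHs] s_sub_t; first by rewrite big_nil dvd1p.
rewrite big_cons exprS dvdp_mul //.
  by rewrite dvdp_XsubCl root_prod_XsubC s_sub_t ?mem_head.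
by apply: IHs => x xs; rewrite s_sub_t // inE xs orbT.
Qed.

Lemma char_poly_conj (F : fieldType) n (P M : 'M[F]_n) : P \in unitmx ->
  char_poly (invmx P *m M *m P) = char_poly M.
Proof.
move=> P_unit; rewrite /char_poly /char_poly_mx.
have -> : 'X%:M - map_mx polyC (invmx P *m M *m P) =
    map_mx polyC (invmx P) *m ('X%:M - map_mx polyC M) *m map_mx polyC P.
  rewrite mulmxBr mulmxBl !map_mxM; congr (_ - _).
  by rewrite -mulmxA -scalar_mxC mulmxA -map_mxM mulVmx // map_mx1 mul1mx.
rewrite !det_mulmx !det_map_mx mulrC mulrA -rmorphM -det_mulmx mulmxV //.
by rewrite det1 rmorph1 mul1r.
Qed.

Section SymmetricDiagonalization.
Variables (R : realFieldType) (n : nat).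
Implicit Types M : 'M[R]_n.+1.

Lemma trmx_horner_mx M p : M^T = M -> (horner_mx M p)^T = horner_mx M p.
Proof.
move=> M_sym; elim/poly_ind: p => [|p c IHp]; first by rewrite rmorph0 trmx0.
rewrite rmorphD rmorphM /= horner_mx_X horner_mx_C linearD /= tr_scalar_mx.
rewrite [(_ * _)^T]trmx_mul IHp M_sym; congr (_ + _).
by have := congr1 (horner_mx M) (mulrC 'X p); rewrite !rmorphM /= horner_mx_X.
Qed.

Lemma trmx_exp M k : M^T = M -> (M ^+ k)^T = M ^+ k.
Proof.
move=> M_sym; elim: k => [|k IHk]; first by rewrite expr0 trmx1.
rewrite exprS [(_ * _)^T]trmx_mul IHk M_sym.
by change (M ^+ k * M = M * M ^+ k); rewrite -exprSr exprS.
Qed.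

Lemma sym_mx_sqr_eq0 M : M^T = M -> M * M = 0 -> M = 0.
Proof.
move=> M_sym MM0; apply/matrixP => i j; rewrite mxE.
have : (M *m M^T) i i = 0 by rewrite M_sym [M *m M]MM0 mxE.
rewrite mxE => /eqP; rewrite psumr_eq0 => [/allP/(_ j (mem_index_enum _))|k _].
  by rewrite mxE -expr2 sqrf_eq0 => /eqP.
by rewrite mxE -expr2 sqr_ge0.
Qed.

Lemma sym_mx_nilpotent_eq0 M k : M^T = M -> M ^+ k.+1 = 0 -> M = 0.
Proof.
move=> M_sym; elim: k => [|k IHk] Mk0; first by rewrite -[M]expr1.
apply: IHk; apply: sym_mx_sqr_eq0; first exact: trmx_exp.
by rewrite -exprD addSn -addnS exprD Mk0 mulr0.
Qed.

Lemma sym_mx_diagonalizable M s : M^T = M ->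
  char_poly M = \prod_(x <- s) ('X - x%:P) -> diagonalizable M.
Proof.
move=> M_sym charM; apply/diagonalizableP; exists (undup s); first exact: undup_uniq.
apply: mxminpoly_min; apply: (@sym_mx_nilpotent_eq0 _ n); first exact: trmx_horner_mx.
rewrite -rmorphXn /=.
have size_s : size s = n.+1.
  by have := size_char_poly M; rewrite charM size_prod_XsubC => -[].
have /prod_XsubC_dvd_exp : {subset s <= undup s} by move=> x; rewrite mem_undup.
rewrite size_s => /dvdpP[q ->].
by rewrite -charM rmorphM /= Cayley_Hamilton mulr0.
Qed.

End SymmetricDiagonalization.

Lemma sym_mx_eigenbasis (R : realFieldType) n (A : 'M[R]_n) s : A^T = A ->
  char_poly A = \prod_(x <- s) ('X - x%:P) ->
  exists2 P : 'M[R]_n, P \in unitmx & P *m A = diag_mx (\row_i s`_i) *m P.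
Proof.
case: n A => [|n] A A_sym charA.
  by exists 1%:M; [exact: unitmx1 | rewrite [LHS]flatmx0 [RHS]flatmx0].
have [P P_unit] := sym_mx_diagonalizable A_sym charA.
move=> /(similar_diagLR P_unit)[D]; rewrite conjVmx // => A_def.
have PA : P *m A = diag_mx D *m P by rewrite A_def !mulmxA mulmxV // mul1mx.
have /tuple_permP[p s_def] : perm_eq s [tuple D 0 i | i < n.+1].
  apply: prod_XsubC_eq; rewrite -charA A_def char_poly_conj //.
  rewrite char_poly_trig ?diag_mx_is_trig //= big_map big_enum /=.
  by apply: eq_bigr => i _; rewrite mxE eqxx mulr1n.
exists (row_perm p P); first by rewrite row_permE unitmx_mul unitmx_perm.
have -> : row_perm p P *m A = row_perm p (diag_mx D *m P).
  by rewrite !row_permE -mulmxA PA.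
apply/matrixP => i j; rewrite !mul_diag_mx !mxE.
by rewrite s_def nth_mktuple tnth_mktuple.
Qed.

Section QuadraticForms.
Variable R : rcfType.

Lemma quad_formE m (c : 'rV[R]_m) (X : 'M[R]_m) :
  (c *m X *m c^T) 0 0 = \sum_i \sum_j c 0 i * X i j * c 0 j.
Proof.
rewrite mxE exchange_big /=; apply: eq_bigr => j _.
by rewrite !mxE mulr_suml.
Qed.

Lemma mulmx_trmxE m (u w : 'rV[R]_m) : (u *m w^T) 0 0 = \sum_i u 0 i * w 0 i.
Proof. by rewrite mxE; apply: eq_bigr => i _; rewrite mxE. Qed.

Lemma mulmx_const1E m (u : 'rV[R]_m) : (u *m (const_mx 1 : 'cV_m)) 0 0 = \sum_i u 0 i.
Proof. by rewrite mxE; apply: eq_bigr => i _; rewrite mxE mulr1. Qed.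

Lemma mulmx_trmx_ge0 m (u : 'rV[R]_m) : 0 <= (u *m u^T) 0 0.
Proof. by rewrite mulmx_trmxE sumr_ge0 // => i _; rewrite -expr2 sqr_ge0. Qed.

Lemma eigenrows_orthogonal m (A P : 'M[R]_m) (D : 'rV[R]_m) i j :
  A^T = A -> P *m A = diag_mx D *m P -> D 0 i != D 0 j -> (P *m P^T) i j = 0.
Proof.
move=> A_sym PA Dij; set G := P *m P^T.
have G_sym : G^T = G by rewrite trmx_mul trmxK.
have DG_sym : (diag_mx D *m G)^T = diag_mx D *m G.
  by rewrite mulmxA -PA !trmx_mul trmxK A_sym mulmxA.
have /matrixP/(_ j i)/eqP := DG_sym.
have G_ji : G j i = G i j by rewrite -[in LHS]G_sym mxE.
clearbody G; rewrite mxE !mul_diag_mx !mxE G_ji -subr_eq0 -mulrBl.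
by rewrite mulf_eq0 subr_eq0 (negPf Dij) => /eqP.
Qed.

Lemma rayleigh_lower_bound m (A P : 'M[R]_m) (D : 'rV[R]_m) (t : R) (c : 'rV[R]_m) :
  A^T = A -> P *m A = diag_mx D *m P -> (forall i, c 0 i != 0 -> t <= D 0 i) ->
  t * ((c *m P) *m (c *m P)^T) 0 0 <= ((c *m P) *m A *m (c *m P)^T) 0 0.
Proof.
move=> A_sym PA c_supp; set G := P *m P^T.
(* As G i j = 0 unless D i = D j, c i (D i - t) G i j c j = w i G i j w j. *)
pose w := \row_i (c 0 i * Num.sqrt (D 0 i - t)).
suff -> : ((c *m P) *m A *m (c *m P)^T) 0 0 =
    t * ((c *m P) *m (c *m P)^T) 0 0 + ((w *m P) *m (w *m P)^T) 0 0.
  by rewrite lerDl mulmx_trmx_ge0.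
have quadG (u : 'rV[R]_m) : ((u *m P) *m (u *m P)^T) 0 0 = \sum_i \sum_j u 0 i * G i j * u 0 j.
  by rewrite trmx_mul mulmxA -(mulmxA u) quad_formE.
have -> : (c *m P) *m A *m (c *m P)^T = c *m (diag_mx D *m G) *m c^T.
  by rewrite trmx_mul !mulmxA -(mulmxA c P A) PA !mulmxA.
rewrite !quadG quad_formE.
rewrite mulr_sumr -big_split; apply: eq_bigr => i _.
rewrite mulr_sumr -big_split; apply: eq_bigr => j _ /=.
rewrite mul_diag_mx ![(\matrix_(_, _) _) _ _]mxE.
have [ci0|/c_supp t_le_Di] := eqVneq (c 0 i) 0; first by rewrite ci0; ring.
have [cj0|_] := eqVneq (c 0 j) 0; first by rewrite cj0; ring.
have [Dij|/(eigenrows_orthogonal A_sym PA) G0] := eqVneq (D 0 i) (D 0 j); last first.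
  by rewrite -/G in G0; rewrite G0; ring.
rewrite -Dij; set sq := Num.sqrt _.
have sq2 : sq ^+ 2 = D 0 i - t by rewrite sqr_sqrtr // subr_ge0.
by rewrite -[D 0 i](subrK t) -sq2; ring.
Qed.

Lemma mulmx_trmx_gt0 m (u : 'rV[R]_m) : u != 0 -> 0 < (u *m u^T) 0 0.
Proof.
move=> u_neq0; rewrite lt_def mulmx_trmx_ge0 andbT; apply: contra u_neq0 => /eqP uu0.
have nonneg k : true -> 0 <= u 0 k * u^T k 0 by rewrite mxE -expr2 sqr_ge0.
rewrite mxE in uu0; apply/eqP/rowP => i; apply/eqP; rewrite mxE -sqrf_eq0.
by have := psumr_eq0P nonneg uu0 (i := i) isT; rewrite mxE -expr2 => ->.
Qed.

Lemma exists_unit_submx_orthogonal m n k (U : 'M[R]_(m, n)) (Z : 'M[R]_(n, k)) :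
  (k < \rank U)%N -> exists u : 'rV[R]_n, [/\ (u <= U)%MS, u *m Z = 0 & (u *m u^T) 0 0 = 1].
Proof.
move=> k_lt_rank.
have : kermx (row_base U *m Z) != 0.
  rewrite -mxrank_eq0 mxrank_ker subn_eq0 -ltnNge.
  exact: leq_ltn_trans (rank_leq_col _) k_lt_rank.
case/rowV0Pn => g; rewrite sub_kermx => /eqP gZ0 g_neq0.
set w := g *m row_base U.
have w_gt0 : 0 < (w *m w^T) 0 0 by rewrite mulmx_trmx_gt0 // mulmx_free_eq0 ?row_base_free.
pose a := (Num.sqrt ((w *m w^T) 0 0))^-1.
exists (a *: w); split.
- by rewrite scalemx_sub // (submx_trans (submxMl _ _)) ?eq_row_base.
- by rewrite -scalemxAl -mulmxA gZ0 scaler0.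
rewrite -scalemxAl linearZ /= -scalemxAr scalerA mxE -expr2 exprVn.
by rewrite sqr_sqrtr ?ltW // mulVf // gt_eqF.
Qed.

Lemma size_eigenvalues_desc n (A : 'M[R]_n) s : eigenvalues_desc A s -> size s = n.
Proof. by case=> _ charA; have := size_char_poly A; rewrite charA size_prod_XsubC => -[]. Qed.

Lemma sym_mx_top_eigenspace n (A : 'M[R]_n) s k :
  A^T = A -> eigenvalues_desc A s -> (k < size s)%N ->
  exists2 U : 'M[R]_n, \rank U = k.+1 &
    forall u : 'rV_n, (u <= U)%MS -> s`_k * (u *m u^T) 0 0 <= (u *m A *m u^T) 0 0.
Proof.
move=> A_sym eigs k_lt_s; have size_s := size_eigenvalues_desc eigs.
case: eigs => s_sorted charA.
have [P P_unit PA] := sym_mx_eigenbasis A_sym charA.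
exists (pid_mx k.+1 *m P).
  by rewrite mxrankMfree ?row_free_unit // rank_pid_mx // -size_s.
move=> u /submxP[g ->]; rewrite mulmxA; apply: rayleigh_lower_bound A_sym PA _ => i gi_neq0.
have i_le_k : (i <= k)%N.
  apply: contraNT gi_neq0 => /negPf i_gt_k; rewrite mxE big1 // => j _.
  by rewrite mxE; case: eqP => [->|_] /=; rewrite ?ltnS ?i_gt_k mulr0.
rewrite mxE; apply: (sorted_leq_nth ge_trans lexx) => //.
by rewrite inE size_s.
Qed.

End QuadraticForms.

Lemma adjmx_quad_formE (R : rcfType) n (e : rel 'I_n) (u : 'rV[R]_n) :
  (u *m adjmx R e *m u^T) 0 0 = \sum_i \sum_j (e i j)%:R * (u 0 i * u 0 j).
Proof.
rewrite quad_formE; apply: eq_bigr => i _; apply: eq_bigr => j _.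
by rewrite mxE mulrCA mulrA.
Qed.

Lemma adjmx_forms_le (R : rcfType) n (e : rel 'I_n) (x y : 'rV[R]_n) :
  irreflexive e -> (x *m x^T) 0 0 = 1 -> (y *m y^T) 0 0 = 1 -> y *m x^T = 0 ->
  x *m (const_mx 1 : 'cV_n) = 0 -> y *m (const_mx 1 : 'cV_n) = 0 ->
  (x *m adjmx R e *m x^T) 0 0 + (y *m adjmx R e *m y^T) 0 0 <= 2/3 * n%:R - 2.
Proof.
move=> e_irr x_unit y_unit yx0 x_ones y_ones.
have sum_sq (u : 'rV[R]_n) : (u *m u^T) 0 0 = 1 -> \sum_i u 0 i ^+ 2 = 1.
  by rewrite mulmx_trmxE; under eq_bigr do rewrite -expr2.
have sum0 (u : 'rV[R]_n) : u *m (const_mx 1 : 'cV_n) = 0 -> \sum_i u 0 i = 0.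
  by rewrite -mulmx_const1E => ->; rewrite mxE.
have xy0 : \sum_i x 0 i * y 0 i = 0.
  by under eq_bigr do rewrite mulrC; rewrite -mulmx_trmxE yx0 mxE.
have := adjacency_form_le (v := fun i => (x 0 i, y 0 i)) e_irr
  (sum_sq x x_unit) (sum_sq y y_unit) xy0 (sum0 x x_ones) (sum0 y y_ones).
rewrite /dot2 /=; under eq_bigr do under eq_bigr do rewrite mulrDr.
by under eq_bigr do rewrite big_split /=; rewrite big_split /= -!adjmx_quad_formE.
Qed.

Theorem theorem1p3 (R : realType) (n : nat) (e : rel 'I_n) (s : seq R) :
  (3 <= n)%N -> simple_graph e ->
  eigenvalues_desc (adjmx R e) s ->
  nth 0 s 2 <= n%:R / 3 - 1.
Proof.
move=> n_ge3 [e_sym e_irr] eigs.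
have A_sym : (adjmx R e)^T = adjmx R e by apply/matrixP => i j; rewrite !mxE e_sym.
have two_lt_s : (2 < size s)%N by rewrite (size_eigenvalues_desc eigs).
have [U rankU rayleighU] := sym_mx_top_eigenspace A_sym eigs two_lt_s.
pose ones : 'cV[R]_n := const_mx 1.
have [x [xU x_ones x_unit]] :
    exists x : 'rV_n, [/\ (x <= U)%MS, x *m ones = 0 & (x *m x^T) 0 0 = 1].
  by apply: exists_unit_submx_orthogonal; rewrite rankU.
have [y [yU y_ones_x y_unit]] :
    exists y : 'rV_n, [/\ (y <= U)%MS, y *m row_mx ones x^T = 0 & (y *m y^T) 0 0 = 1].
  by apply: exists_unit_submx_orthogonal; rewrite rankU.
move: y_ones_x; rewrite mul_mx_row => /eqP; rewrite row_mx_eq0 => /andP[/eqP y_ones /eqP y_x].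
have := adjmx_forms_le e_irr x_unit y_unit y_x x_ones y_ones.
have := rayleighU x xU; have := rayleighU y yU; rewrite x_unit y_unit !mulr1.
lra.
Qed.
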